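(* Realize $T^*S^{n-1}=\{(\gamma,p)\in\mathbb R^{2n}:\langle\gamma,\gamma\rangle=1,\ \langle\gamma,p\rangle=0\}$ via the Legendre transformation $p=-\frac1{\varepsilon^2}\mathbf I(\gamma\wedge\dot\gamma)\gamma$, let $\dot\gamma=X_\gamma(\gamma,p)$ be its inverse and $h(\gamma,p)=\frac12\langle X_\gamma(\gamma,p),p\rangle$. Then the reduced equations of the rolling of a ball with a gyroscope over a sphere without slipping and twisting (i.e. $\delta l-\mathbf{JK}(\dot\gamma,\delta\gamma)=\mathbf f(\dot\gamma,\delta\gamma)$ for all $\delta\gamma\in T_\gamma S^{n-1}$) take on $T^*S^{n-1}$ the form $$\dot\gamma=X_\gamma(\gamma,p),\qquad \dot p=\frac{1-\varepsilon}{\varepsilon^3}\mathbf I(\gamma\wedge X_\gamma)X_\gamma+\frac1{\varepsilon^2}\kappa X_\gamma+\mu\gamma,$$ where $$\mu=\frac{\varepsilon-1}{\varepsilon^3}\langle\mathbf I(\gamma\wedge X_\gamma)X_\gamma,\gamma\rangle-2h(\gamma,p)+\frac1{\varepsilon^2}\langle X_\gamma,\kappa\gamma\rangle.$$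
   Context: Fix $n\ge3$, ball radius $a$, mass $m$, $D=ma^2$, sphere radius $b$, and $\varepsilon=b/(b+a)$ or $\varepsilon=b/(b-a)$. On $so(n)$ use $\langle X,Y\rangle=-\frac12\operatorname{tr}(XY)$; on $\mathbb R^n$ the Euclidean product. For $x,y\in\mathbb R^n$, $x\wedge y=xy^T-yx^T$. $\mathbf I=\mathbb I+D\,\mathrm{Id}_{so(n)}$ is a symmetric positive definite operator on $so(n)$, $\kappa\in so(n)$ fixed. Reduced Lagrangian $l(\gamma,\dot\gamma)=-\frac1{2\varepsilon^2}\langle\mathbf I(\gamma\wedge\dot\gamma)\gamma,\dot\gamma\rangle$ on $TS^{n-1}$, $\delta l=\langle\frac{\partial l}{\partial\gamma}-\frac d{dt}\frac{\partial l}{\partial\dot\gamma},\delta\gamma\rangle$, $\mathbf{JK}(\dot\gamma,\delta\gamma)=\frac{2\varepsilon-1}{\varepsilon^3}\langle\mathbf I(\gamma\wedge\dot\gamma)\dot\gamma,\delta\gamma\rangle$, $\mathbf f(\dot\gamma,\delta\gamma)=\frac1{\varepsilon^2}\langle\dot\gamma,\kappa\delta\gamma\rangle$. *)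

From HB Require Import structures.
From mathcomp Require Import all_boot all_order all_algebra.
From mathcomp Require Import all_classical all_reals all_analysis.
Import Order.TTheory GRing.Theory Num.Theory.
Import numFieldNormedType.Exports.
Set Implicit Arguments. Unset Strict Implicit. Unset Printing Implicit Defensive.
Local Open Scope ring_scope.
Local Open Scope classical_set_scope.

Definition dotv (R : realType) (n : nat) (x y : 'cV[R]_n) : R := (x^T *m y) 0 0.

Definition so_inner (R : realType) (n : nat) (X Y : 'M[R]_n) : R :=
  - (2%:R)^-1 * \tr (X *m Y).

Definition skewm (R : realType) (n : nat) (X : 'M[R]_n) : Prop := X^T = - X.

Definition wedge (R : realType) (n : nat) (x y : 'cV[R]_n) : 'M[R]_n :=
  x *m y^T - y *m x^T.

Definition spd_on_so (R : realType) (n : nat) (I : 'M[R]_n -> 'M[R]_n) : Prop :=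
  [/\ (forall X, skewm X -> skewm (I X)),
      (forall X Y, skewm X -> skewm Y -> I (X + Y) = I X + I Y),
      (forall (c : R) X, skewm X -> I (c *: X) = c *: I X),
      (forall X Y, skewm X -> skewm Y -> so_inner (I X) Y = so_inner X (I Y))
    & (forall X, skewm X -> X != 0 -> 0 < so_inner (I X) X)].

Definition lagr (R : realType) (n : nat) (eps : R) (I : 'M[R]_n -> 'M[R]_n)
  (g gd : 'cV[R]_n) : R :=
  - (2%:R * eps ^+ 2)^-1 * dotv (I (wedge g gd) *m g) gd.

Definition grad (R : realType) (n : nat) (f : 'cV[R]_n -> R) (x : 'cV[R]_n)
  : 'cV[R]_n :=
  \col_i derive1 (fun h : R => f (x + h *: delta_mx i 0)) 0.

Definition dcurve (R : realType) (n : nat) (c : R -> 'cV[R]_n) (t : R)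
  : 'cV[R]_n :=
  \col_i derive1 (fun s => c s i 0) t.

Definition legendre (R : realType) (n : nat) (eps : R) (I : 'M[R]_n -> 'M[R]_n)
  (g gd : 'cV[R]_n) : 'cV[R]_n :=
  - (eps ^+ 2)^-1 *: (I (wedge g gd) *m g).

(* X_gamma(g,p): the inverse of the Legendre transformation on the fibre
   T_g S^{n-1} (the tangent vector v with <g,v> = 0 mapped to p) *)
Definition Xgam (R : realType) (n : nat) (eps : R) (I : 'M[R]_n -> 'M[R]_n)
  (g p : 'cV[R]_n) : 'cV[R]_n :=
  xget 0 [set v | dotv g v = 0 /\ legendre eps I g v = p].

Definition ham (R : realType) (n : nat) (eps : R) (I : 'M[R]_n -> 'M[R]_n)
  (g p : 'cV[R]_n) : R :=
  (2%:R)^-1 * dotv (Xgam eps I g p) p.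

(* The reduced equations at time t:
   delta l - JK(gd, dg) = f(gd, dg) for all dg in T_g S^{n-1}, where
   delta l = < dl/dg - d/dt dl/dgd, dg >. *)
Definition reduced_eq (R : realType) (n : nat) (eps : R)
  (I : 'M[R]_n -> 'M[R]_n) (kappa : 'M[R]_n) (gam : R -> 'cV[R]_n) (t : R)
  : Prop :=
  let g := gam t in
  let gd := dcurve gam t in
  let dl_dg := grad (fun x => lagr eps I x gd) g in
  let dl_dgd := fun s => grad (fun v => lagr eps I (gam s) v) (dcurve gam s) in
  forall dg : 'cV[R]_n, dotv g dg = 0 ->
    dotv (dl_dg - dcurve dl_dgd t) dg
    - ((2%:R * eps - 1) / eps ^+ 3) * dotv (I (wedge g gd) *m gd) dg
    = (eps ^+ 2)^-1 * dotv gd (kappa *m dg).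

From HB Require Import structures.
From mathcomp Require Import all_boot all_order all_algebra.
From mathcomp Require Import all_classical all_reals all_analysis.
From mathcomp Require Import ring.
Import Order.TTheory GRing.Theory Num.Theory.
Import numFieldNormedType.Exports.
Set Implicit Arguments.
Unset Strict Implicit.
Unset Printing Implicit Defensive.

Local Open Scope ring_scope.

(* The reduced Lagrangian is the quadratic form
   l(g, v) = <I(g /\ v), g /\ v> / (2 eps^2) of the bivector g /\ v, so its
   partial gradients are eps^-2 I(g /\ v) v and the Legendre momentum p.
   Positive definiteness of I makes the Legendre map injective on the tangent
   space T_g S^{n-1}, hence X_g(g, p) is the velocity itself.  The reduced
   equations then say that the covector
   dp - (1 - eps)/eps^3 I(g /\ dg) dg - eps^-2 kappa dg annihilates T_g S^{n-1},
   i.e. it is a multiple mu g of g, and differentiating the constraints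
   <g, g> = 1 and <p, g> = 0 identifies the multiplier mu. *)

Section RealDerivatives.
Variable R : realType.

Lemma derivable_sumr k (F : 'I_k -> R -> R) t :
  (forall i, derivable (F i) t 1) -> derivable (fun s => \sum_i F i s) t 1.
Proof.
move=> dF; have -> : (fun s => \sum_i F i s) = \sum_(i < k) F i.
  by apply/funext => s; rewrite fct_sumE.
exact: derivable_sum.
Qed.

Lemma derive1_sumr k (F : 'I_k -> R -> R) t :
  (forall i, derivable (F i) t 1) ->
  derive1 (fun s => \sum_i F i s) t = \sum_i derive1 (F i) t.
Proof.
move=> dF; have -> : (fun s => \sum_i F i s) = \sum_(i < k) F i.
  by apply/funext => s; rewrite fct_sumE.
by rewrite derive1E derive_sum //; under eq_bigr do rewrite -derive1E.
Qed.

Lemma derive1M (f g : R -> R) t : derivable f t 1 -> derivable g t 1 ->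
  derive1 (fun s => f s * g s) t = derive1 f t * g t + f t * derive1 g t.
Proof.
by move=> df dg; rewrite !derive1E (deriveM df dg) /= addrC mulrC.
Qed.

Lemma derive1_quadratic_at0 (a c d : R) :
  derive1 (fun h : R => a + h * c + h ^+ 2 * d) 0 = c.
Proof.
rewrite derive1E.
have -> : (fun h : R => a + h * c + h ^+ 2 * d) =
    (cst a + id * cst c) + id ^+ 2 * cst d by [].
rewrite derive_val /= /GRing.scale /= expr1.
by rewrite !(mulr0, mul0r, addr0, add0r, mulr1).
Qed.

End RealDerivatives.

Section InnerProduct.
Variables (R : realType) (n : nat).
Local Notation V := 'cV[R]_n.
Local Notation e i := (delta_mx i 0 : V).

Lemma dotvE (x y : V) : dotv x y = \sum_i x i 0 * y i 0.
Proof. by rewrite /dotv mxE; apply: eq_bigr => i _; rewrite mxE. Qed.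

Lemma dotvC (x y : V) : dotv x y = dotv y x.
Proof. by rewrite !dotvE; apply: eq_bigr => i _; rewrite mulrC. Qed.

Lemma dotvDr (x y z : V) : dotv x (y + z) = dotv x y + dotv x z.
Proof. by rewrite /dotv mulmxDr mxE. Qed.

Lemma dotvZr (x y : V) (c : R) : dotv x (c *: y) = c * dotv x y.
Proof. by rewrite /dotv -scalemxAr mxE. Qed.

Lemma dotvBr (x y z : V) : dotv x (y - z) = dotv x y - dotv x z.
Proof. by rewrite -scaleN1r dotvDr dotvZr mulN1r. Qed.

Lemma dotvDl (x y z : V) : dotv (x + y) z = dotv x z + dotv y z.
Proof. by rewrite !(dotvC _ z) dotvDr. Qed.

Lemma dotvZl (x y : V) (c : R) : dotv (c *: x) y = c * dotv x y.
Proof. by rewrite !(dotvC _ y) dotvZr. Qed.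

Lemma dotvBl (x y z : V) : dotv (x - y) z = dotv x z - dotv y z.
Proof. by rewrite !(dotvC _ z) dotvBr. Qed.

Lemma dotv0r (x : V) : dotv x 0 = 0.
Proof. by rewrite /dotv mulmx0 mxE. Qed.

Lemma dotv_delta i (y : V) : dotv (e i) y = y i 0.
Proof.
rewrite dotvE (bigD1 i) //= big1 ?addr0; first by rewrite mxE !eqxx mul1r.
by move=> j /negbTE ji; rewrite mxE ji mul0r.
Qed.

Lemma dotv_skew (B : 'M[R]_n) (x y : V) : skewm B ->
  dotv y (B *m x) = - dotv x (B *m y).
Proof.
move=> sB; rewrite /dotv; transitivity ((y^T *m (B *m x))^T 0 0).
  by rewrite [RHS]mxE.
by rewrite !trmx_mul trmxK sB mulmxN mulNmx mulmxA mxE.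
Qed.

Lemma dotv_skewvv (B : 'M[R]_n) (x : V) : skewm B -> dotv x (B *m x) = 0.
Proof.
move=> /(dotv_skew x x)/eqP.
by rewrite -addr_eq0 -mulr2n mulrn_eq0 => /eqP.
Qed.

Lemma dotvv_eq0 (x : V) : dotv x x = 0 -> x = 0.
Proof.
rewrite dotvE => /eqP; rewrite psumr_eq0 => [/allP x0|i _]; last first.
  by rewrite -expr2 sqr_ge0.
apply/matrixP => i j; rewrite (ord1 j) mxE.
have /implyP/(_ isT) := x0 i (mem_index_enum i).
by rewrite mulf_eq0 orbb => /eqP.
Qed.

Lemma col_sum_delta (x : V) : x = \sum_j x j 0 *: e j.
Proof.
by rewrite {1}[x]matrix_sum_delta; under eq_bigr do rewrite big_ord1.
Qed.

Lemma tangent_annihilator (g D : V) : dotv g g = 1 ->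
  (forall dg, dotv g dg = 0 -> dotv D dg = 0) <-> D = dotv D g *: g.
Proof.
move=> gg; split => [D0 | -> dg gdg]; last by rewrite dotvZl dotvC gdg mulr0.
have tangent : dotv g (D - dotv D g *: g) = 0.
  by rewrite dotvBr dotvZr gg mulr1 dotvC subrr.
apply/eqP; rewrite -subr_eq0; apply/eqP/dotvv_eq0.
by rewrite dotvBl D0 // dotvZl tangent mulr0 subrr.
Qed.

End InnerProduct.

Section Wedge.
Variables (R : realType) (n : nat).
Local Notation V := 'cV[R]_n.
Local Notation e i := (delta_mx i 0 : V).

Lemma skew0 : skewm (0 : 'M[R]_n).
Proof. by rewrite /skewm trmx0 oppr0. Qed.

Lemma skewD (X Y : 'M[R]_n) : skewm X -> skewm Y -> skewm (X + Y).
Proof. by rewrite /skewm => hX hY; rewrite linearD /= hX hY opprD. Qed.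

Lemma skewZ (X : 'M[R]_n) c : skewm X -> skewm (c *: X).
Proof. by rewrite /skewm => hX; rewrite linearZ /= hX scalerN. Qed.

Lemma wedge_skew (x y : V) : skewm (wedge x y).
Proof. by rewrite /skewm /wedge linearB /= !trmx_mul !trmxK opprB. Qed.

Lemma wedge0l (y : V) : wedge 0 y = 0.
Proof. by rewrite /wedge mul0mx trmx0 mulmx0 subrr. Qed.

Lemma wedge0r (x : V) : wedge x 0 = 0.
Proof. by rewrite /wedge mul0mx trmx0 mulmx0 subrr. Qed.

Lemma wedgeDl (x y v : V) : wedge (x + y) v = wedge x v + wedge y v.
Proof. by rewrite /wedge mulmxDl linearD /= mulmxDr opprD addrACA. Qed.

Lemma wedgeDr (x y v : V) : wedge v (x + y) = wedge v x + wedge v y.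
Proof. by rewrite /wedge mulmxDl linearD /= mulmxDr opprD addrACA. Qed.

Lemma wedgeZl (x v : V) c : wedge (c *: x) v = c *: wedge x v.
Proof. by rewrite /wedge linearZ /= -scalemxAl -scalemxAr scalerBr. Qed.

Lemma wedgeZr (x v : V) c : wedge v (c *: x) = c *: wedge v x.
Proof. by rewrite /wedge linearZ /= -scalemxAl -scalemxAr scalerBr. Qed.

Lemma wedge_sum_delta (x y : V) :
  wedge x y = \sum_j \sum_k (x j 0 * y k 0) *: wedge (e j) (e k).
Proof.
rewrite {1}[x]col_sum_delta.
rewrite (big_morph (fun a => wedge a y) (fun a b => wedgeDl a b y) (wedge0l y)).
apply: eq_bigr => j _; rewrite {1}[y]col_sum_delta.
rewrite (big_morph (fun b => wedge (x j 0 *: e j) b) (fun a b => wedgeDr a b _)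
  (wedge0r _)).
by apply: eq_bigr => k _; rewrite wedgeZl wedgeZr scalerA.
Qed.

Lemma so_innerC (X Y : 'M[R]_n) : so_inner X Y = so_inner Y X.
Proof. by rewrite /so_inner mxtrace_mulC. Qed.

Lemma so_inner_wedge (B : 'M[R]_n) (x y : V) : skewm B ->
  so_inner B (wedge x y) = dotv (B *m y) x.
Proof.
move=> sB; rewrite /so_inner /wedge mulmxBr linearB /= !mulmxA.
rewrite (mxtrace_mulC (B *m x)) (mxtrace_mulC (B *m y)) /mxtrace !big_ord1.
rewrite -/(dotv y (B *m x)) -/(dotv x (B *m y)) (dotv_skew x y sB) dotvC.
have two0 : (2 : R) != 0 by rewrite pnatr_eq0.
by field.
Qed.

End Wedge.

Section Calculus.
Variables (R : realType) (n : nat).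
Local Notation V := 'cV[R]_n.
Local Notation e i := (delta_mx i 0 : V).

Lemma grad_quadratic (f : V -> R) (x c : V) :
  (forall i, exists a d,
     forall h, f (x + h *: e i) = a + h * c i 0 + h ^+ 2 * d) ->
  grad f x = c.
Proof.
move=> fq; apply/matrixP => i j; rewrite (ord1 j) mxE.
have [a [d fi]] := fq i.
by under eq_fun do rewrite fi; rewrite derive1_quadratic_at0.
Qed.

Lemma derive1_dotv (a b : R -> V) t :
  (forall i, derivable (fun s => a s i 0) t 1) ->
  (forall i, derivable (fun s => b s i 0) t 1) ->
  derive1 (fun s => dotv (a s) (b s)) t =
  dotv (dcurve a t) (b t) + dotv (a t) (dcurve b t).
Proof.
move=> da db; under eq_fun do rewrite dotvE.
rewrite derive1_sumr => [|i]; last exact: derivableM.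
rewrite !dotvE -big_split; apply: eq_bigr => i _.
by rewrite derive1M // !mxE.
Qed.

Lemma sphere_tangent (gam : R -> V) t :
  (forall s, dotv (gam s) (gam s) = 1) ->
  (forall i, derivable (fun s => gam s i 0) t 1) ->
  dotv (gam t) (dcurve gam t) = 0.
Proof.
move=> unit dgam; have := derive1_dotv dgam dgam.
under eq_fun do rewrite unit.
rewrite derive1_cst dotvC => /eqP.
by rewrite eq_sym -mulr2n mulrn_eq0 => /eqP.
Qed.

End Calculus.

Section Inertia.
Variables (R : realType) (n : nat) (I : 'M[R]_n -> 'M[R]_n).
Hypothesis hI : spd_on_so I.
Local Notation V := 'cV[R]_n.
Local Notation e i := (delta_mx i 0 : V).

Lemma I_skew X : skewm X -> skewm (I X).
Proof. by case: hI => skI *; apply: skI. Qed.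

Lemma I_sym X Y : skewm X -> skewm Y -> so_inner (I X) Y = so_inner X (I Y).
Proof. by case: hI => _ _ _ symI _; apply: symI. Qed.

Lemma I_pos X : skewm X -> X != 0 -> 0 < so_inner (I X) X.
Proof. by case: hI => _ _ _ _ posI; apply: posI. Qed.

Lemma I_scale c X : skewm X -> I (c *: X) = c *: I X.
Proof. by case: hI => _ _ scI _ _; apply: scI. Qed.

Lemma I_addZ (X Y : 'M[R]_n) c : skewm X -> skewm Y ->
  I (X + c *: Y) = I X + c *: I Y.
Proof.
case: hI => _ addI _ _ _ sX sY.
by rewrite addI ?I_scale //; apply: skewZ.
Qed.

Lemma I_sum k (F : 'I_k -> 'M[R]_n) : (forall j, skewm (F j)) ->
  skewm (\sum_j F j) /\ I (\sum_j F j) = \sum_j I (F j).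
Proof.
move=> sF; apply: (big_rec2 (fun X Y => skewm X /\ I X = Y)).
  split; first exact: skew0.
  by rewrite -[in I _](scale0r 0) I_scale ?scale0r //; apply: skew0.
move=> j X _ _ [sX <-]; split; first exact: skewD.
by rewrite -[X in F j + X]scale1r I_addZ // scale1r.
Qed.

Lemma I_wedge_sum_delta (x y : V) :
  I (wedge x y) = \sum_j \sum_k (x j 0 * y k 0) *: I (wedge (e j) (e k)).
Proof.
have sjk j k : skewm ((x j 0 * y k 0) *: wedge (e j) (e k)).
  exact/skewZ/wedge_skew.
rewrite wedge_sum_delta (I_sum (fun j => (I_sum (sjk j)).1)).2.
apply: eq_bigr => j _; rewrite (I_sum (sjk j)).2.
by apply: eq_bigr => k _; rewrite I_scale //; apply: wedge_skew.
Qed.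

Lemma so_inner_I_expand (W E : 'M[R]_n) h : skewm W -> skewm E ->
  so_inner (I (W + h *: E)) (W + h *: E) =
  so_inner (I W) W + h * (2 * so_inner (I W) E) + h ^+ 2 * so_inner (I E) E.
Proof.
move=> sW sE.
have : so_inner (I E) W = so_inner (I W) E by rewrite I_sym // so_innerC.
rewrite I_addZ // /so_inner mulmxDl !mulmxDr -!scalemxAl -!scalemxAr.
have two0 : (2 : R) != 0 by rewrite pnatr_eq0.
have half0 : - 2^-1 != 0 :> R by rewrite oppr_eq0 invr_eq0.
by rewrite !linearD !linearZ /= => /(mulfI half0) ->; field.
Qed.

Lemma wedge_mulmx (x y z : V) : wedge x y *m z = dotv y z *: x - dotv x z *: y.
Proof.
by rewrite /wedge mulmxBl -!mulmxA [y^T *m z]mx11_scalar [x^T *m z]mx11_scalar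
  !mul_mx_scalar.
Qed.

Lemma I_wedge_tangent_eq0 (g u : V) : dotv g g = 1 -> dotv g u = 0 ->
  I (wedge g u) *m g = 0 -> u = 0.
Proof.
move=> gg gu IWg0; have sW := wedge_skew g u.
have W0 : wedge g u = 0.
  apply/eqP; apply: contraT => /(I_pos sW).
  have sIW := I_skew sW.
  by rewrite so_inner_wedge // dotvC dotv_skew // IWg0 dotv0r oppr0 ltxx.
move: (wedge_mulmx g u g); rewrite W0 mul0mx dotvC gu gg scale0r scale1r sub0r.
by move/eqP; rewrite eq_sym oppr_eq0 => /eqP.
Qed.

(* [I] is only linear on so(n), not assumed continuous: expanding in the basis
   [e_j /\ e_k] reduces derivability to polynomials in the coordinates. *)
Lemma derivable_I_wedge_mulmx (a b c : R -> V) t :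
  (forall i, derivable (fun s => a s i 0) t 1) ->
  (forall i, derivable (fun s => b s i 0) t 1) ->
  (forall i, derivable (fun s => c s i 0) t 1) ->
  forall i, derivable (fun s => (I (wedge (a s) (b s)) *m c s) i 0) t 1.
Proof.
move=> da db dc i.
have -> : (fun s => (I (wedge (a s) (b s)) *m c s) i 0) = fun s =>
    \sum_l (\sum_j \sum_k a s j 0 * b s k 0 * I (wedge (e j) (e k)) i l)
            * c s l 0.
  apply/funext => s; rewrite mxE; apply: eq_bigr => l _.
  rewrite I_wedge_sum_delta summxE; congr (_ * _); apply: eq_bigr => j _.
  by rewrite summxE; apply: eq_bigr => k _; rewrite mxE.
apply: derivable_sumr => l; apply: derivableM => //.
apply: derivable_sumr => j; apply: derivable_sumr => k.
by apply: derivableM; [exact: derivableM | exact: derivable_cst].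
Qed.

End Inertia.

Section Legendre.
Variables (R : realType) (n : nat) (I : 'M[R]_n -> 'M[R]_n) (eps : R).
Hypothesis hI : spd_on_so I.
Hypothesis eps0 : eps != 0.
Local Notation V := 'cV[R]_n.
Local Notation e i := (delta_mx i 0 : V).

Lemma lagr_so_inner (x v : V) :
  lagr eps I x v = (2 * eps ^+ 2)^-1 * so_inner (I (wedge x v)) (wedge x v).
Proof.
have sIW := I_skew hI (wedge_skew x v).
rewrite /lagr so_inner_wedge // [in RHS]dotvC dotv_skew // [in RHS]dotvC.
by rewrite mulrN mulNr.
Qed.

Lemma grad_lagr_pos (x v : V) :
  grad (fun y => lagr eps I y v) x = (eps ^+ 2)^-1 *: (I (wedge x v) *m v).
Proof.
apply: grad_quadratic => i; set W := wedge x v; set E := wedge (e i) v.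
exists ((2 * eps ^+ 2)^-1 * so_inner (I W) W).
exists ((2 * eps ^+ 2)^-1 * so_inner (I E) E) => h.
have two0 : (2 : R) != 0 by rewrite pnatr_eq0.
have [sW sE] : skewm W /\ skewm E by split; apply: wedge_skew.
have sIW := I_skew hI sW.
rewrite lagr_so_inner wedgeDl wedgeZl -/W -/E so_inner_I_expand //.
by rewrite [so_inner (I W) E]so_inner_wedge // dotvC dotv_delta !mxE; field.
Qed.

Lemma grad_lagr_vel (x v : V) :
  grad (fun w => lagr eps I x w) v = legendre eps I x v.
Proof.
apply: grad_quadratic => i; set W := wedge x v; set E := wedge x (e i).
exists ((2 * eps ^+ 2)^-1 * so_inner (I W) W).
exists ((2 * eps ^+ 2)^-1 * so_inner (I E) E) => h.
have two0 : (2 : R) != 0 by rewrite pnatr_eq0.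
have [sW sE] : skewm W /\ skewm E by split; apply: wedge_skew.
have sIW := I_skew hI sW.
rewrite lagr_so_inner wedgeDr wedgeZr -/W -/E so_inner_I_expand //.
rewrite [so_inner (I W) E]so_inner_wedge // dotvC dotv_skew // dotv_delta.
by rewrite !mxE; field.
Qed.

Lemma legendre_normal (g v : V) : dotv (legendre eps I g v) g = 0.
Proof.
by rewrite dotvZl dotvC dotv_skewvv ?mulr0 //; exact/(I_skew hI)/wedge_skew.
Qed.

Lemma Xgam_legendre (g v : V) : dotv g g = 1 -> dotv g v = 0 ->
  Xgam eps I g (legendre eps I g v) = v.
Proof.
move=> gg gv; apply: xget_unique; first by split.
move=> w [gw /eqP]; rewrite /legendre -subr_eq0 -scalerBr scaler_eq0.
rewrite oppr_eq0 invr_eq0 expf_eq0 (negbTE eps0) andbF /= => /eqP IWg.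
apply/eqP; rewrite -subr_eq0; apply/eqP/(I_wedge_tangent_eq0 hI gg).
  by rewrite dotvBr gw gv subrr.
rewrite -scaleN1r wedgeDr wedgeZr (I_addZ hI); try exact: wedge_skew.
by rewrite mulmxDl -scalemxAl scaleN1r.
Qed.

Lemma dlegendre_normal (gam : R -> 'cV[R]_n) t :
  (forall s, dotv (gam s) (gam s) = 1) ->
  (forall i, derivable (fun s => gam s i 0) t 1) ->
  (forall i, derivable (fun s => dcurve gam s i 0) t 1) ->
  let p := fun s => legendre eps I (gam s) (dcurve gam s) in
  dotv (dcurve p t) (gam t) = - dotv (p t) (dcurve gam t).
Proof.
move=> unit dgam ddgam p.
have dp i : derivable (fun s => p s i 0) t 1.
  under eq_fun do rewrite /p /legendre mxE.
  by apply: derivableM; [exact: derivable_cst | exact: derivable_I_wedge_mulmx].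
have := derive1_dotv dp dgam.
under eq_fun do rewrite legendre_normal.
by rewrite derive1_cst => /eqP; rewrite eq_sym addr_eq0 => /eqP.
Qed.

End Legendre.

Lemma tangent_equation_iff (R : realType) (n : nat) (eps : R)
    (A K : 'M[R]_n) (g gd pd P : 'cV[R]_n) :
  eps != 0 -> skewm K -> dotv g g = 1 -> dotv pd g = - dotv P gd ->
  let mu := (eps - 1) / eps ^+ 3 * dotv (A *m gd) g - 2 * (2^-1 * dotv gd P)
            + (eps ^+ 2)^-1 * dotv gd (K *m g) in
  (forall dg, dotv g dg = 0 ->
     dotv ((eps ^+ 2)^-1 *: (A *m gd) - pd) dg
     - ((2 * eps - 1) / eps ^+ 3) * dotv (A *m gd) dg
     = (eps ^+ 2)^-1 * dotv gd (K *m dg)) <->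
  pd = ((1 - eps) / eps ^+ 3) *: (A *m gd) + (eps ^+ 2)^-1 *: (K *m gd)
       + mu *: g.
Proof.
move=> eps0 sK gg pdg mu.
have two0 : (2 : R) != 0 by rewrite pnatr_eq0.
set F := ((1 - eps) / eps ^+ 3) *: (A *m gd) + (eps ^+ 2)^-1 *: (K *m gd).
have residual dg : dotv ((eps ^+ 2)^-1 *: (A *m gd) - pd) dg
     - ((2 * eps - 1) / eps ^+ 3) * dotv (A *m gd) dg
     - (eps ^+ 2)^-1 * dotv gd (K *m dg) = dotv (F - pd) dg.
  rewrite /F !dotvBl dotvDl !dotvZl (dotv_skew dg gd sK) (dotvC (K *m gd)).
  by field.
have normal : dotv (F - pd) g = - mu.
  rewrite /F /mu dotvBl dotvDl !dotvZl pdg (dotvC (K *m gd)).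
  rewrite (dotv_skew gd g sK) (dotvC P).
  by field.
transitivity (forall dg, dotv g dg = 0 -> dotv (F - pd) dg = 0).
  split=> eqn dg /eqn; first by rewrite -residual => ->; rewrite subrr.
  by move=> res0; apply/eqP; rewrite -subr_eq0 residual res0.
rewrite tangent_annihilator // normal scaleNr.
split=> [Fpd | ->]; first by rewrite -[pd](subKr F) Fpd opprK.
by rewrite opprD addrA subrr sub0r.
Qed.

Theorem proposition7p6 (R : realType) (n : nat) (hn : (3 <= n)%N)
  (a m b eps : R) (ha : 0 < a) (hm : 0 < m) (hb : 0 < b)
  (heps : eps = b / (b + a) \/ (b != a /\ eps = b / (b - a)))
  (II : 'M[R]_n -> 'M[R]_n)
  (hI : spd_on_so (fun X => II X + (m * a ^+ 2) *: X))
  (kappa : 'M[R]_n) (hkappa : skewm kappa)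
  (gam : R -> 'cV[R]_n)
  (hsph : forall s, dotv (gam s) (gam s) = 1)
  (hd1 : forall (i : 'I_n) s, derivable (fun u => gam u i 0) s 1)
  (hd2 : forall (i : 'I_n) s,
      derivable (derive1 (fun u => gam u i 0)) s 1)
  (t : R) :
  let I := fun X => II X + (m * a ^+ 2) *: X in
  let p := fun s => legendre eps I (gam s) (dcurve gam s) in
  let g := gam t in
  let Xv := Xgam eps I g (p t) in
  let mu := (eps - 1) / eps ^+ 3 * dotv (I (wedge g Xv) *m Xv) g
            - 2%:R * ham eps I g (p t)
            + (eps ^+ 2)^-1 * dotv Xv (kappa *m g) in
  reduced_eq eps I kappa gam t <->
  (dcurve gam t = Xv /\
   dcurve p t = ((1 - eps) / eps ^+ 3) *: (I (wedge g Xv) *m Xv)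
                + (eps ^+ 2)^-1 *: (kappa *m Xv) + mu *: g).
Proof.
move=> I p g Xv mu.
have eps0 : eps != 0.
  have b0 : b != 0 by rewrite gt_eqF.
  case: heps => [|[ba]] ->; rewrite mulf_neq0 ?invr_eq0 //.
    by rewrite gt_eqF ?addr_gt0.
  by rewrite subr_eq0.
have dgam i : derivable (fun s => gam s i 0) t 1 by exact: hd1.
have ddgam i : derivable (fun s => dcurve gam s i 0) t 1.
  by under eq_fun do rewrite mxE; exact: hd2.
have XvE : Xv = dcurve gam t.
  by rewrite /Xv /p /g Xgam_legendre //; exact: sphere_tangent hsph dgam.
rewrite /reduced_eq /= grad_lagr_pos //.
have -> : (fun s => grad (fun v => lagr eps I (gam s) v) (dcurve gam s)) = p.
  by apply/funext => s; rewrite grad_lagr_vel.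
rewrite /mu /ham -/Xv XvE.
rewrite tangent_equation_iff //; last exact: dlegendre_normal.
by split=> [-> | [_ ->]].
Qed.
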